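(* Let $n>1$ be an integer and $S=S_1\cup S_2\subseteq U_{6n}$ with $S_1=\{a^{2r}b,\ a^{2r}b^2\mid 1\le r\le n-1\}$ and $S_2=\{a^{2r+1}b\mid 0\le r\le n-1\}$. Then $\mathrm{Cay}(U_{6n},S)$ is a connected integral graph whose spectrum (eigenvalues with multiplicities) is $\{[1-2n]^2,[-2]^{2n-2},[1]^{4n-2},[n-2]^1,[3n-2]^1\}$.
   Context: For an integer $n\ge1$, $U_{6n}=\langle a,b\mid a^{2n}=b^3=1,\ a^{-1}ba=b^{-1}\rangle$, a group of order $6n$. For a group $G$ and $S\subseteq G$ with $1\notin S=S^{-1}$, the Cayley graph $\mathrm{Cay}(G,S)$ has vertex set $G$ and edges $\{g,sg\}$ for $g\in G,s\in S$. A graph is integral if all eigenvalues of its adjacency matrix are integers. $[\lambda]^m$ denotes eigenvalue $\lambda$ with multiplicity $m$. *)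

From mathcomp Require Import all_boot all_order all_algebra all_fingroup all_field.
Set Implicit Arguments. Unset Strict Implicit. Unset Printing Implicit Defensive.
Import GRing.Theory Num.Theory.
Local Open Scope ring_scope.

Definition cay_adj (gT : finGroupType) (S : {set gT}) : rel gT :=
  fun g h => ((h * g^-1)%g \in S).

Definition cay_mx (gT : finGroupType) (S : {set gT}) : 'M[int]_#|gT| :=
  \matrix_(i < #|gT|, j < #|gT|)
     (cay_adj S (@enum_val gT predT i) (@enum_val gT predT j))%:R.

Definition cay_connected (gT : finGroupType) (S : {set gT}) : Prop :=
  forall g h : gT, connect (cay_adj S) g h.

Definition integral_mx m (A : 'M[int]_m) : Prop :=
  forall l : algC, eigenvalue (map_mx intr A) l -> l \in Num.int.

Definition S1 (gT : finGroupType) (a b : gT) (n : nat) : {set gT} :=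
  [set (a ^+ (2 * r) * b)%g | r : 'I_n & (1 <= r)%N]
  :|: [set (a ^+ (2 * r) * b ^+ 2)%g | r : 'I_n & (1 <= r)%N].

Definition S2 (gT : finGroupType) (a b : gT) (n : nat) : {set gT} :=
  [set (a ^+ (2 * r).+1 * b)%g | r : 'I_n].

From mathcomp Require Import all_boot all_order all_algebra all_fingroup all_field.
From mathcomp Require Import zify ring.
Import GRing.Theory Num.Theory.
Set Implicit Arguments. Unset Strict Implicit. Unset Printing Implicit Defensive.
Local Open Scope ring_scope.

(* The subgroup <a^2> of U_6n is central and cyclic of order n, with quotient
   S_3; writing every element as a^(2r) times one of six coset representatives
   c, the connection set S consists of the representatives b and b^2 taken with
   every r <> 0, and ab taken with every r.  Hence on a product function
   phi(c) psi(r) the adjacency operator acts by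
     (n - 1) (B phi) + n (T phi)   if psi is constant, and
     - (B phi) psi                 if psi has sum zero,
   where B and T are the actions of {b, b^2} and {ab} on the six cosets.
   Tensoring six joint eigenvectors of B and T with an orthogonal basis of
   functions on Z_n (the constant and the Helmert vectors) gives an orthogonal
   integral eigenbasis, from which the characteristic polynomial is read off.
   Connectivity holds because b = (a^2 b)^-1 (a^2 b^2) and a = (ab) b^-1. *)

Lemma char_poly_similar (R : idomainType) k (A D V : 'M[R]_k) :
  \det V != 0 -> A *m V = V *m D -> char_poly A = char_poly D.
Proof.
move=> detV AV.
have AVc : char_poly_mx A *m map_mx polyC V = map_mx polyC V *m char_poly_mx D.
  by rewrite /char_poly_mx mulmxBl mulmxBr -!map_mxM AV scalar_mxC.
have := congr1 determinant AVc; rewrite !det_mulmx det_map_mx => detE.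
apply: (@mulIf _ (\det V)%:P); first by rewrite polyC_eq0.
by rewrite /char_poly detE mulrC.
Qed.

Lemma char_poly_orthogonal_eigenbasis (R : idomainType) k (A U : 'M[R]_k)
    (d g : 'rV[R]_k) :
  A *m U = U *m diag_mx d -> U^T *m U = diag_mx g -> (forall i, g 0 i != 0) ->
  char_poly A = \prod_i ('X - (d 0 i)%:P).
Proof.
move=> AU UtU g_neq0.
have detU : \det U != 0.
  have := congr1 determinant UtU; rewrite det_mulmx det_tr det_diag => detUU.
  have : \prod_i g 0 i != 0 by apply/prodf_neq0 => i _.
  by rewrite -detUU mulf_eq0 negb_or => /andP[].
rewrite (char_poly_similar detU AU) char_poly_trig ?diag_mx_is_trig //.
by apply: eq_bigr => i _; rewrite mxE eqxx mulr1n.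
Qed.

Lemma integral_mx_split (I : finType) k (A : 'M[int]_k) (d : I -> int) :
  char_poly A = \prod_i ('X - (d i)%:P) -> integral_mx A.
Proof.
move=> cpA l; rewrite eigenvalue_root_char -map_char_poly cpA rmorph_prod.
under eq_bigr do rewrite rmorphB /= map_polyX map_polyC.
rewrite -(big_map (fun i => (d i)%:~R) predT (fun x => 'X - x%:P)).
by rewrite root_prod_XsubC => /mapP[i _ ->]; apply: intr_int.
Qed.

Section CayleyGraph.
Variables (gT : finGroupType) (S : {set gT}).
Local Notation vert := (@enum_val gT predT).

Lemma cay_connected_gen : <<S>>%g = [set: gT] -> cay_connected S.
Proof.
move=> genS.
pose R := [set x | [forall g, connect (cay_adj S) g (x * g)%g]].
have groupR : group_set R.
  apply/group_setP; split.
    by rewrite inE; apply/forallP => g; rewrite mul1g connect0.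
  move=> x y; rewrite !inE => /forallP xR /forallP yR; apply/forallP => g.
  by apply: connect_trans (yR g) _; rewrite -mulgA; apply: xR.
have SR : S \subset R.
  apply/subsetP => s sS; rewrite inE; apply/forallP => g; apply: connect1.
  by rewrite /cay_adj mulgK.
move=> g h; have : (h * g^-1)%g \in R.
  have genR : <<S>>%g \subset R by rewrite (gen_subG _ (Group groupR)).
  by rewrite (subsetP genR) // genS inE.
by rewrite inE => /forallP/(_ g); rewrite mulgKV.
Qed.

Lemma cay_char_poly_eigenbasis (f : gT -> gT -> int) (d g : gT -> int) :
    (forall y x, \sum_(s in S) f y (s * x)%g = d y * f y x) ->
    (forall y z, \sum_x f y x * f z x = if y == z then g y else 0) ->
    (forall y, g y != 0) ->
  char_poly (cay_mx S) = \prod_y ('X - (d y)%:P).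
Proof.
move=> f_eigen f_orth g_neq0.
pose U := \matrix_(k, j) f (vert j) (vert k).
have AU : cay_mx S *m U = U *m diag_mx (\row_j d (vert j)).
  apply/matrixP => k j; rewrite mul_mx_diag !mxE mulrC -f_eigen.
  rewrite (eq_bigr (fun i => (cay_adj S (vert k) (vert i))%:R * f (vert j) (vert i)));
    last by move=> i _; rewrite !mxE.
  rewrite -(big_enum_val (fun x => (cay_adj S (vert k) x)%:R * f (vert j) x)).
  rewrite (reindex_inj (mulIg (vert k))) [RHS]big_mkcond /=.
  by apply: eq_bigr => x _; rewrite /cay_adj mulgK; case: (x \in S); rewrite ?mul1r ?mul0r.
have UtU : U^T *m U = diag_mx (\row_j g (vert j)).
  apply/matrixP => i j; rewrite !mxE.
  rewrite (eq_bigr (fun k => f (vert i) (vert k) * f (vert j) (vert k)));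
    last by move=> k _; rewrite !mxE.
  rewrite -(big_enum_val (fun x => f (vert i) x * f (vert j) x)) f_orth.
  by rewrite (inj_eq enum_val_inj); case: eqP => [->|]; rewrite ?mulr1n ?mulr0n.
rewrite (char_poly_orthogonal_eigenbasis AU UtU) => [|i]; last by rewrite mxE.
by rewrite (big_enum_val (fun y => 'X - (d y)%:P)); apply: eq_bigr => i _; rewrite mxE.
Qed.

End CayleyGraph.

Lemma big_setU_disjoint (T : finType) (V : nmodType) (A B : {set T}) (F : T -> V) :
  [disjoint A & B] -> \sum_(x in A :|: B) F x = \sum_(x in A) F x + \sum_(x in B) F x.
Proof. by move=> dAB; rewrite -bigU //; apply: eq_bigl => x; rewrite !inE. Qed.

Lemma sum_Zp_shift (V : nmodType) p (F : 'I_p.+1 -> V) s :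
  \sum_r F (r + s) = \sum_r F r.
Proof. by rewrite [RHS](reindex_inj (addIr s)). Qed.

Lemma sum_Zp_shift_neq0 (V : zmodType) p (F : 'I_p.+1 -> V) (s : 'I_p.+1) :
  \sum_(r : 'I_p.+1 | (0 < r)%N) F (r + s) = \sum_r F r - F s.
Proof.
rewrite -(sum_Zp_shift F s) [in RHS](bigD1 ord0) //= (_ : ord0 + s = s) ?add0r //.
rewrite addrAC subrr add0r; apply: eq_bigl => r.
by rewrite -val_eqE /= lt0n.
Qed.

Section HelmertBasis.
Variable n : nat.
Implicit Types t r : 'I_n.

Definition helmert t r : int :=
  if t == 0 :> nat then 1 else (r < t)%N%:R - t%:R * (r == t)%:R.

Definition helmert_norm t : int := if t == 0 :> nat then n%:R else t%:R + t%:R ^+ 2.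

Lemma sum_ord_lt t : \sum_(r : 'I_n) (r < t)%N%:R = t%:R :> int.
Proof.
rewrite (eq_bigr (fun r : 'I_n => if (r < t)%N then 1 else 0)) => [|r _]; last by case: ltnP.
rewrite -big_mkcond /= -(big_ord_widen _ (fun=> 1)) 1?ltnW //.
by rewrite sumr_const card_ord.
Qed.

Lemma sum_ord_eq t (F : 'I_n -> int) : \sum_(r : 'I_n) (r == t)%:R * F r = F t.
Proof.
rewrite (bigD1 t) //= eqxx mul1r big1 ?addr0 // => r /negbTE ->.
by rewrite mul0r.
Qed.

Lemma sum_helmert t :
  \sum_(r : 'I_n) helmert t r = if t == 0 :> nat then n%:R else 0.
Proof.
rewrite /helmert; case: eqP => _; first by rewrite sumr_const card_ord.
rewrite sumrB sum_ord_lt.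
under eq_bigr do rewrite mulrC.
by rewrite (sum_ord_eq t (fun=> t%:R)) subrr.
Qed.

Lemma helmert_supp t r : t != 0 :> nat -> helmert t r != 0 -> (r <= t)%N.
Proof.
rewrite /helmert => /negbTE ->; apply: contraR; rewrite -ltnNge => ltr.
by rewrite ltnNge (ltnW ltr) -val_eqE gtn_eqF // mulr0 subrr.
Qed.

(* For 0 < t < t', [helmert t'] is 1 on the support of [helmert t]. *)
Lemma helmert_orth_lt t t' :
  (t < t')%N -> \sum_(r : 'I_n) helmert t r * helmert t' r = 0.
Proof.
move=> ltt.
have t'_neq0 : t' != 0 :> nat by rewrite -lt0n (leq_ltn_trans _ ltt).
have [t0 | t_neq0] := eqVneq (t : nat) 0.
  by under eq_bigr do rewrite {1}/helmert t0 mul1r; rewrite sum_helmert (negbTE t'_neq0).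
transitivity (\sum_(r : 'I_n) helmert t r); last by rewrite sum_helmert (negbTE t_neq0).
apply: eq_bigr => r _.
have [-> | /(helmert_supp t_neq0) ler] := eqVneq (helmert t r) 0; first by rewrite mul0r.
rewrite {2}/helmert (negbTE t'_neq0) (leq_ltn_trans ler ltt).
by rewrite -val_eqE ltn_eqF ?(leq_ltn_trans ler ltt) // mulr0 subr0 mulr1.
Qed.

Lemma helmert_norm_sum t : \sum_(r : 'I_n) helmert t r ^+ 2 = helmert_norm t.
Proof.
rewrite /helmert /helmert_norm; case: eqP => _.
  by under eq_bigr do rewrite expr1n; rewrite sumr_const card_ord.
rewrite (eq_bigr (fun r => (r < t)%N%:R + (r == t)%:R * t%:R ^+ 2)) => [|r _].
  by rewrite big_split /= sum_ord_lt sum_ord_eq.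
by rewrite -val_eqE; case: (ltngtP r t) => [_|_|_] /=; ring.
Qed.

Lemma helmert_orth t t' :
  \sum_(r : 'I_n) helmert t r * helmert t' r = if t == t' then helmert_norm t else 0.
Proof.
case: eqVneq => [<- | neq]; first by rewrite -helmert_norm_sum; under eq_bigr do rewrite -expr2.
have [ltt | ltt | eqt] := ltngtP t t'; first exact: helmert_orth_lt.
  by under eq_bigr do rewrite mulrC; apply: helmert_orth_lt.
by case/eqP: neq; apply: val_inj.
Qed.

Lemma helmert_norm_neq0 t : helmert_norm t != 0.
Proof.
have := ltn_ord t; rewrite /helmert_norm.
by case: ifP => [_|/negbT]; rewrite -?natrX -?natrD natz; lia.
Qed.

End HelmertBasis.

Lemma expn2_mod3 r e : (2 ^ (2 * r + e) = 2 ^ e %[mod 3])%N.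
Proof.
rewrite expnD expnM -modnMml.
suff -> : ((2 ^ 2) ^ r %% 3 = 1)%N by rewrite mul1n.
by elim: r => // r IH; rewrite expnS -modnMmr IH.
Qed.

(* [c : 'I_6] codes the coset of <a^2> containing a^(c / 3) b^(c %% 3); then
   [code_mul] is the multiplication of these cosets (a copy of S_3). *)
Fact code_mul_subproof (c0 c : 'I_6) :
  (3 * ((c0 %/ 3 + c %/ 3) %% 2) + (c0 %% 3 * 2 ^ (c %/ 3) + c %% 3) %% 3 < 6)%N.
Proof. lia. Qed.

Definition code_mul (c0 c : 'I_6) : 'I_6 := Ordinal (code_mul_subproof c0 c).

Lemma code_mul_div3 c0 c : (code_mul c0 c %/ 3 = (c0 %/ 3 + c %/ 3) %% 2)%N.
Proof. rewrite /=; lia. Qed.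

Lemma code_mul_mod3 c0 c :
  (code_mul c0 c %% 3 = (c0 %% 3 * 2 ^ (c %/ 3) + c %% 3) %% 3)%N.
Proof. rewrite /=; lia. Qed.

Definition c_b : 'I_6 := @Ordinal 6 1 isT.
Definition c_b2 : 'I_6 := @Ordinal 6 2 isT.
Definition c_a : 'I_6 := @Ordinal 6 3 isT.
Definition c_ab : 'I_6 := @Ordinal 6 4 isT.

(* The rows of [phi] are common eigenvectors, with eigenvalues [phi_b] and
   [phi_ab], of the operators f |-> f (b c) + f (b^2 c) and f |-> f (ab c). *)
Definition phi_tab : seq (seq int) :=
  [:: [:: 1; 1; 1; 1; 1; 1]; [:: 1; 1; 1; -1; -1; -1]; [:: 1; -1; 0; 0; 1; -1];
      [:: 1; 1; -2; -2; 1; 1]; [:: 1; -1; 0; 0; -1; 1]; [:: 1; 1; -2; 2; -1; -1]].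

Definition phi (q c : 'I_6) : int := nth 0 (nth [::] phi_tab q) c.
Definition phi_b (q : 'I_6) : int := nth 0 [:: 2; 2; -1; -1; -1; -1] q.
Definition phi_ab (q : 'I_6) : int := nth 0 [:: 1; -1; 1; 1; -1; -1] q.
Definition phi_norm (q : 'I_6) : int := nth 0 [:: 6; 6; 4; 12; 4; 12] q.

Lemma phi_b_eigen q c :
  phi q (code_mul c_b c) + phi q (code_mul c_b2 c) = phi_b q * phi q c.
Proof. by case: q => [[|[|[|[|[|[|//]]]]]] ?]; case: c => [[|[|[|[|[|[|//]]]]]] ?]. Qed.

Lemma phi_ab_eigen q c : phi q (code_mul c_ab c) = phi_ab q * phi q c.
Proof. by case: q => [[|[|[|[|[|[|//]]]]]] ?]; case: c => [[|[|[|[|[|[|//]]]]]] ?]. Qed.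

Lemma phi_orth q q' : \sum_c phi q c * phi q' c = if q == q' then phi_norm q else 0.
Proof.
rewrite !big_ord_recl big_ord0.
by case: q => [[|[|[|[|[|[|//]]]]]] ?]; case: q' => [[|[|[|[|[|[|//]]]]]] ?].
Qed.

Lemma phi_norm_neq0 q : phi_norm q != 0.
Proof. by case: q => [[|[|[|[|[|[|//]]]]]] ?]. Qed.

Section TensorBasis.
Variable n : nat.
Local Notation coord := ('I_6 * 'I_n)%type.

Definition eigvec (p y : coord) : int := phi p.1 y.1 * helmert p.2 y.2.

Definition eigval (p : coord) : int :=
  if p.2 == 0 :> nat then (n%:Z - 1) * phi_b p.1 + n%:Z * phi_ab p.1 else - phi_b p.1.

Lemma eigvec_orth p p' : \sum_y eigvec p y * eigvec p' y =
  if p == p' then phi_norm p.1 * helmert_norm p.2 else 0.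
Proof.
case: p p' => q t [q' t'].
rewrite -(pair_bigA _ (fun c r => eigvec (q, t) (c, r) * eigvec (q', t') (c, r))) /=.
rewrite (eq_bigr (fun c => phi q c * phi q' c * \sum_r helmert t r * helmert t' r)).
  rewrite -mulr_suml phi_orth helmert_orth xpair_eqE.
  by case: eqP => _; case: eqP => _; rewrite ?mulr0 ?mul0r.
by move=> c _; rewrite mulr_sumr; apply: eq_bigr => r _; rewrite mulrACA.
Qed.

End TensorBasis.

Lemma prod_eigval m (n := m.+1) :
  \prod_(p : 'I_6 * 'I_n) ('X - (eigval p)%:P) =
    ('X - (1 - 2 * n%:Z)%:P) ^+ 2 * ('X - (-2)%:P) ^+ (2 * n - 2)
    * ('X - 1%:P) ^+ (4 * n - 2) * ('X - (n%:Z - 2)%:P) * ('X - (3 * n%:Z - 2)%:P).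
Proof.
have row q : \prod_(t : 'I_n) ('X - (eigval (q, t))%:P) =
    ('X - ((n%:Z - 1) * phi_b q + n%:Z * phi_ab q)%:P) * ('X - (- phi_b q)%:P) ^+ m.
  by rewrite big_ord_recl (eq_bigr (fun=> 'X - (- phi_b q)%:P)) ?prodr_const ?card_ord.
rewrite -(pair_bigA _ (fun q t => 'X - (eigval (q, t))%:P)).
under eq_bigr do rewrite row.
rewrite big_split /= prodrXl !big_ord_recl !big_ord0 /phi_b /phi_ab /= opprK.
have -> : (n%:Z - 1) * 2 + n%:Z * 1 = 3 * n%:Z - 2 by ring.
have -> : (n%:Z - 1) * 2 + n%:Z * -1 = n%:Z - 2 by ring.
have -> : (n%:Z - 1) * -1 + n%:Z * 1 = 1 by ring.
have -> : (n%:Z - 1) * -1 + n%:Z * -1 = 1 - 2 * n%:Z by ring.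
have -> : (2 * n - 2 = m + m)%N by rewrite /n; lia.
have -> : (4 * n - 2 = m + m + m + m + 2)%N by rewrite /n; lia.
rewrite !exprMn expr1n !exprD.
move: ('X - (3 * n%:Z - 2)%:P) ('X - (n%:Z - 2)%:P) ('X - 1%:P) ('X - (1 - 2 * n%:Z)%:P)
  ('X - (-2)%:P) => p1 p2 p3 p4 p5.
move: (p3 ^+ m) (p5 ^+ m) => q3 q5.
ring.
Qed.

Section U6n.
Variables (m : nat) (gT : finGroupType) (a b : gT).
Local Notation n := m.+2.
Local Notation coord := ('I_6 * 'I_n)%type.
Hypotheses (gen_ab : <<[set a; b]>>%g = [set: gT]) (card_gT : #|gT| = (6 * n)%N)
  (a_order : (a ^+ (2 * n)%N = 1)%g) (b_order : (b ^+ 3 = 1)%g)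
  (conj_b : (a^-1 * b * a = b^-1)%g).

Local Open Scope group_scope.

Lemma mulbA : b * a = a * b ^+ 2.
Proof.
have invb : b^-1 = b ^+ 2 by apply: (mulgI b); rewrite mulgV -expgS b_order.
by rewrite -invb -conj_b !mulgA mulgV mul1g.
Qed.

Lemma expgbA j i : b ^+ j * a ^+ i = a ^+ i * b ^+ (j * 2 ^ i)%N.
Proof.
have bjA k : b ^+ k * a = a * b ^+ (k * 2).
  elim: k => [|k IH]; first by rewrite mul1g mulg1.
  by rewrite expgS -mulgA IH mulgA mulbA -mulgA -expgD; congr (_ * b ^+ _); lia.
elim: i j => [|i IH] j; first by rewrite mulg1 mul1g muln1.
by rewrite expgS mulgA bjA -mulgA IH mulgA -expgS expnS mulnA.
Qed.

Lemma expg_ab_mod x y x' y' : (x = x' %[mod 2 * n])%N -> (y = y' %[mod 3])%N ->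
  a ^+ x * b ^+ y = a ^+ x' * b ^+ y'.
Proof.
move=> eqx eqy.
by rewrite -(expg_mod x a_order) eqx expg_mod // -(expg_mod y b_order) eqy expg_mod.
Qed.

Definition nf (p : coord) : gT := a ^+ (2 * p.2 + p.1 %/ 3) * b ^+ (p.1 %% 3).

Definition code_carry (c0 c : 'I_6) : 'I_n := inZp ((c0 %/ 3 + c %/ 3) %/ 2)%N.

Lemma nf_mul c0 r0 c r :
  nf (c0, r0) * nf (c, r) = nf (code_mul c0 c, r0 + r + code_carry c0 c)%R.
Proof.
rewrite /nf /= mulgA -(mulgA _ (b ^+ _)) expgbA mulgA -expgD -mulgA -expgD.
apply: expg_ab_mod; rewrite ?code_mul_div3 ?code_mul_mod3.
  by rewrite /= modnDm muln_modr modnDml; congr (modn _ _); lia.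
by rewrite modn_mod -modnDml -modnMmr expn2_mod3 modnMmr modnDml.
Qed.

Lemma code_carry_row0 (c0 c : 'I_6) : (c0 < 3)%N -> code_carry c0 c = 0%R.
Proof.
move=> c0_lt3; rewrite /code_carry (_ : (_ %/ 2 = 0)%N); last by have := ltn_ord c; lia.
by apply: val_inj.
Qed.

Lemma nf_image : [set nf p | p : coord] = [set: gT].
Proof.
have nf_group : group_set [set nf p | p : coord].
  apply/group_setP; split.
    by rewrite -[1](_ : nf (ord0, ord0) = 1) ?imset_f // /nf /= mulg1.
  move=> _ _ /imsetP[[c0 r0] _ ->] /imsetP[[c r] _ ->].
  by rewrite nf_mul imset_f.
apply/eqP; rewrite eqEsubset subsetT /= -gen_ab (gen_subG _ (Group nf_group)).
rewrite subUset !sub1set; apply/andP; split.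
  by rewrite -[a](_ : nf (c_a, ord0) = a) ?imset_f // /nf /= mulg1 expg1.
by rewrite -[b](_ : nf (c_b, ord0) = b) ?imset_f // /nf /= mul1g expg1.
Qed.

Lemma nf_inj : injective nf.
Proof.
have : #|[set nf p | p : coord]| == #|{: coord}|.
  by rewrite nf_image cardsT card_gT card_prod !card_ord.
by move/imset_injP => nf_inj p q; apply: nf_inj.
Qed.

Definition coord_of (x : gT) : coord := odflt (ord0, ord0) [pick p | nf p == x].

Lemma coord_ofK : cancel coord_of nf.
Proof.
move=> x; rewrite /coord_of; case: pickP => [p /eqP //| nf_neq] /=.
have : x \in [set nf p | p : coord] by rewrite nf_image inE.
by case/imsetP => p _ x_nf; have := nf_neq p; rewrite x_nf eqxx.
Qed.

Lemma nfK : cancel nf coord_of.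
Proof. by move=> p; apply: nf_inj; rewrite coord_ofK. Qed.

Lemma big_coord_of (R : Type) (idx : R) (op : Monoid.com_law idx) (F : coord -> R) :
  \big[op/idx]_(x : gT) F (coord_of x) = \big[op/idx]_p F p.
Proof.
rewrite (reindex nf) /=; first by apply: eq_bigr => p _; rewrite nfK.
by apply: onW_bij; exists coord_of; [apply: nfK | apply: coord_ofK].
Qed.

Definition nf_row (c : 'I_6) (B : {set 'I_n}) : {set gT} := [set nf (c, r) | r in B].

Lemma mem_nf_row c B r : (nf (c, r) \in nf_row c B) = (r \in B).
Proof.
apply/imsetP/idP => [[r' r'B /nf_inj[->]] | rB]; first exact: r'B.
by exists r.
Qed.

Lemma nf_row_disjoint c c' B B' : c != c' -> [disjoint nf_row c B & nf_row c' B'].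
Proof.
move=> neq_c; apply/pred0P => x /=; apply/negbTE/andP.
by case=> /imsetP[r _ ->] /imsetP[r' _ /nf_inj[eq_c _]]; rewrite eq_c eqxx in neq_c.
Qed.

Lemma sum_nf_row c B (F : gT -> int) :
  (\sum_(x in nf_row c B) F x = \sum_(r in B) F (nf (c, r)))%R.
Proof. by rewrite big_imset // => r r' _ _ /nf_inj[]. Qed.

Lemma S_rows : S1 a b n :|: S2 a b n =
  nf_row c_b [set r : 'I_n | (0 < r)%N] :|: nf_row c_b2 [set r : 'I_n | (0 < r)%N]
  :|: nf_row c_ab [set: 'I_n].
Proof.
rewrite /S1 /S2 /nf_row /nf; congr (_ :|: _ :|: _).
- by apply: eq_imset => r /=; rewrite addn0 expg1.
- by apply: eq_imset => r /=; rewrite addn0.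
have nf_ab r : a ^+ (2 * r).+1 * b = a ^+ (2 * r + 4 %/ 3) * b ^+ (4 %% 3).
  by rewrite (_ : 4 %/ 3 = 1)%N // addn1 expg1.
by apply/setP => x; apply/imsetP/imsetP => -[r _ ->]; exists r; rewrite ?inE ?nf_ab.
Qed.

Lemma sum_S (F : gT -> int) : (\sum_(s in S1 a b n :|: S2 a b n) F s =
  \sum_(r : 'I_n | (0 < r)%N) F (nf (c_b, r)) + \sum_(r : 'I_n | (0 < r)%N) F (nf (c_b2, r))
  + \sum_(r : 'I_n) F (nf (c_ab, r)))%R.
Proof.
rewrite S_rows !big_setU_disjoint ?nf_row_disjoint //; last first.
  by rewrite -setI_eq0 setIUl setU_eq0 !setI_eq0 !nf_row_disjoint.
by rewrite !sum_nf_row; congr (_ + _ + _)%R; apply: eq_bigl => r; rewrite inE.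
Qed.

Lemma eigvec_eigen p y : (\sum_(s in S1 a b n :|: S2 a b n)
  eigvec p (coord_of (s * nf y)) = eigval p * eigvec p y)%R.
Proof.
case: p y => q t [c r]; rewrite sum_S.
have row_sum (c0 : 'I_6) (P : pred 'I_n) :
    (\sum_(r0 | P r0) eigvec (q, t) (coord_of (nf (c0, r0) * nf (c, r))) =
     phi q (code_mul c0 c) * \sum_(r0 | P r0) helmert t (r0 + (r + code_carry c0 c)))%R.
  by rewrite mulr_sumr; apply: eq_bigr => r0 _; rewrite nf_mul nfK addrA.
rewrite !row_sum (@code_carry_row0 c_b) ?(@code_carry_row0 c_b2) // addr0.
rewrite !sum_Zp_shift_neq0 sum_Zp_shift.
rewrite -mulrDl phi_b_eigen phi_ab_eigen sum_helmert /eigval /eigvec /=.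
case: ifP => t0; last by rewrite mulr0 !sub0r; ring.
by rewrite /helmert t0 natz; ring.
Qed.

Lemma char_poly_cay : char_poly (cay_mx (S1 a b n :|: S2 a b n)) =
  (\prod_(p : coord) ('X - (eigval p)%:P))%R.
Proof.
rewrite (@cay_char_poly_eigenbasis _ _ (fun y x => eigvec (coord_of y) (coord_of x))
  (fun y => eigval (coord_of y))
  (fun y => phi_norm (coord_of y).1 * helmert_norm (coord_of y).2)%R).
- by rewrite (big_coord_of _ (fun p => 'X - (eigval p)%:P))%R.
- by move=> y x; rewrite -{1}[x]coord_ofK eigvec_eigen.
- move=> y z; rewrite (big_coord_of _ (fun p => eigvec (coord_of y) p * eigvec (coord_of z) p))%R.
  by rewrite eigvec_orth (can_eq coord_ofK).
by move=> y; rewrite mulf_neq0 ?phi_norm_neq0 ?helmert_norm_neq0.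
Qed.

Lemma S_generates : <<S1 a b n :|: S2 a b n>> = [set: gT].
Proof.
set S := S1 a b n :|: S2 a b n.
pose r1 : 'I_n := @Ordinal n 1 isT.
have x_b : nf (c_b, r1) \in S by rewrite /S S_rows !inE mem_nf_row inE.
have x_b2 : nf (c_b2, r1) \in S by rewrite /S S_rows !inE mem_nf_row inE orbT.
have x_ab : nf (c_ab, ord0) \in S by rewrite /S S_rows !inE mem_nf_row inE orbT.
have b_gen : b \in <<S>>.
  have -> : b = (nf (c_b, r1))^-1 * nf (c_b2, r1).
    by rewrite /nf /= !addn0 !modn_small // invMg -mulgA mulKg expg1 expgS expg1 mulKg.
  by rewrite groupM ?groupV ?mem_gen.
have a_gen : a \in <<S>>.
  have -> : a = nf (c_ab, ord0) * b^-1.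
    by rewrite /nf /= (_ : 4 %/ 3 = 1)%N // (_ : 4 %% 3 = 1)%N // !expg1 mulgK.
  by rewrite groupM ?groupV ?b_gen ?mem_gen.
apply/eqP; rewrite eqEsubset subsetT /= -gen_ab gen_subG subUset !sub1set.
by rewrite a_gen b_gen.
Qed.

End U6n.

Theorem corollary4p5 (n : nat) (gT : finGroupType) (a b : gT) :
  (1 < n)%N ->
  <<[set a; b]>>%g = [set: gT] ->
  #|gT| = (6 * n)%N ->
  (a ^+ (2 * n))%g = 1%g -> (b ^+ 3)%g = 1%g -> (a^-1 * b * a)%g = (b^-1)%g ->
  let S := S1 a b n :|: S2 a b n in
  cay_connected S /\ integral_mx (cay_mx S) /\
  char_poly (cay_mx S) =
    ('X - (1 - 2 * (n%:Z))%:P) ^+ 2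
    * ('X - (-2)%:P) ^+ (2 * n - 2)
    * ('X - 1%:P) ^+ (4 * n - 2)
    * ('X - (n%:Z - 2)%:P)
    * ('X - (3 * (n%:Z) - 2)%:P).
Proof.
case: n => [|[|m]] // _ gen_ab card_gT a_order b_order conj_b S.
have cpS := char_poly_cay gen_ab card_gT a_order b_order conj_b.
split; first exact/cay_connected_gen/(S_generates gen_ab card_gT a_order b_order conj_b).
split; first exact: integral_mx_split cpS.
by rewrite cpS prod_eigval.
Qed.
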